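(* Let $A$ be a $d\times d$ $\{0,1\}$-matrix defining a one-sided subshift of finite type, and $\mathbb{F}\in\{\mathbb{R},\mathbb{C}\}$. Let $\iota:NonN(A,\mathbb{F}^d)\to\varprojlim(\mathbb{F}^d,A)$, $\iota(v)=(v,B v,B^2v,\dots)$ where $B$ is the inverse of the restriction of $A$ to $NonN(A,\mathbb{F}^d)$, and let $\kappa:\varprojlim(\mathbb{F}^d,A)\to\mathcal{STAF}(A)$ send a thread $(\vec v_0,\vec v_1,\dots)$ to the staf $K$ with $K(s_0\dots s_{n-1}j)=(\vec v_n)_j$. Then $\iota$ and $\kappa$ are isomorphisms and $A^*\circ\iota=\iota\circ A$, $\sigma^*\circ\kappa=\kappa\circ A^*$. Hence eigen- and generalized eigen-objects of $A$, $A^*$ and $\sigma^*$ correspond. In particular an eigen-staf $K_\mu$ with factor $\mu$ corresponds to a thread $(v^{(0)},v^{(1)},\dots)$ with $v^{(0)}$ a right eigenvector of $A$ with eigenvalue $\mu$ and $v^{(n)}=\mu^{-n}v^{(0)}$, so that $K_\mu(s_0\dots s_{n-1}j)=\mu^{-n}(v^{(0)})_j$; similarly generalized eigen-stafs correspond to generalized eigenvectors of $A$.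
   Context: Symbols are $\{1,\dots,d\}$; $i\to j$ allowable iff $A_{ij}=1$; allowable blocks are words with all consecutive transitions allowable; $\mathcal{B}(A)$ is the set of them. A staf is $K:\mathcal{B}(A)\to\mathbb{F}$ which is additive ($K(bj)=\sum_{k:\,j\to k}K(bjk)$ for every allowable block $bj$) and coherent (values on allowable blocks of equal length ending in the same symbol agree); $\mathcal{STAF}(A)$ is their vector space. A thread is $(\vec v_0,\vec v_1,\dots)$ in $\mathbb{F}^d$ with $\vec v_n=A\vec v_{n+1}$; $\varprojlim(\mathbb{F}^d,A)$ is the space of threads, and $A^*(\vec v_0,\vec v_1,\dots)=(A\vec v_0,A\vec v_1,\dots)=(A\vec v_0,\vec v_0,\vec v_1,\dots)$. $NonN(A,\mathbb{F}^d)$ is the sum of generalized eigenspaces of $A$ for nonzero eigenvalues. The co-action $\sigma^*$ on stafs: $(\sigma^*K)(b)=K(\sigma(b))$ for blocks $b$ of length $>1$, where $\sigma(b)$ deletes the first symbol of $b$, and $(\sigma^*K)(j)=\sum_{k:\,j\to k}K(k)$ for a single symbol $j$. An eigen-staf with factor $\mu$ is a nonzero $K$ with $\sigma^*K=\mu K$. *)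

From HB Require Import structures.
From mathcomp Require Import all_boot all_order all_algebra.
Set Implicit Arguments. Unset Strict Implicit. Unset Printing Implicit Defensive.
Import Order.TTheory GRing.Theory Num.Theory.
Local Open Scope ring_scope.

Section SFT.
Variables (F : fieldType) (d : nat) (A : 'M[F]_d).

Definition allowed (i j : 'I_d) : bool := A i j == 1.

Definition allowable (s : seq 'I_d) : bool :=
  (0 < size s)%N && sorted allowed s.

(* A staf is a function on blocks; only its values on allowable blocks matter. *)
Definition staf_additive (K : seq 'I_d -> F) : Prop :=
  forall (b : seq 'I_d) (j : 'I_d), allowable (rcons b j) ->
    K (rcons b j) = \sum_(k | allowed j k) K (rcons (rcons b j) k).

Definition staf_coherent (K : seq 'I_d -> F) : Prop :=
  forall (b c : seq 'I_d) (j : 'I_d),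
    allowable (rcons b j) -> allowable (rcons c j) -> size b = size c ->
    K (rcons b j) = K (rcons c j).

Definition is_staf (K : seq 'I_d -> F) : Prop :=
  staf_additive K /\ staf_coherent K.

Definition staf_eq (K K' : seq 'I_d -> F) : Prop :=
  forall s, allowable s -> K s = K' s.

Definition sigma_star (K : seq 'I_d -> F) : seq 'I_d -> F :=
  fun s => match s with
           | [::] => K [::]
           | [:: j] => \sum_(k | allowed j k) K [:: k]
           | _ :: s' => K s'
           end.

Definition eigen_staf (K : seq 'I_d -> F) (mu : F) : Prop :=
  (exists s, allowable s /\ K s != 0) /\
  staf_eq (sigma_star K) (fun s => mu * K s).

Definition sigma_shift_pow (mu : F) (k : nat) (K : seq 'I_d -> F) : seq 'I_d -> F :=
  iter k (fun L => fun s => sigma_star L s - mu * L s) K.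

Definition is_thread (v : nat -> 'cV[F]_d) : Prop :=
  forall n, v n = A *m v n.+1.

Definition Astar (v : nat -> 'cV[F]_d) : nat -> 'cV[F]_d :=
  fun n => A *m v n.

(* NonN(A, F^d): the non-nilpotent (Fitting) part of A, i.e. the sum of the
   generalized eigenspaces for nonzero eigenvalues, = range of A^d. *)
Definition NonN (v : 'cV[F]_d) : Prop :=
  exists w : 'cV[F]_d, v = A ^+ d *m w.

Definition iota_map (B : 'cV[F]_d -> 'cV[F]_d) (v : 'cV[F]_d) : nat -> 'cV[F]_d :=
  fun n => iter n B v.

Definition kappa (v : nat -> 'cV[F]_d) : seq 'I_d -> F :=
  fun s => match s with
           | [::] => 0
           | j :: s' => v (size s') (last j s') 0
           end.

End SFT.

From HB Require Import structures.
From mathcomp Require Import all_boot all_order all_algebra.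
Set Implicit Arguments. Unset Strict Implicit. Unset Printing Implicit Defensive.
Import Order.TTheory GRing.Theory Num.Theory.
Local Open Scope ring_scope.

(* Since A is a 0/1 matrix, additivity of a staf is the relation (A v_{n+1})_j = (v_n)_j
   read along blocks, and coherence says the value on a block only depends on its length
   n and its last symbol j; so a staf is a sequence of vectors v_n = K(. j) satisfying
   the thread relation, except that v_n is only determined on the set S_n of symbols
   ending allowable blocks of length n+1.  The sets S_n decrease and are stationary
   from n = d on, and (A^d w)_j only involves w on S_d; hence replacing v_n by
   A^d v_{n+d} gives a genuine thread, unique on S_n, and kappa is bijective.  On the
   other side, A is invertible on NonN A = range A^d and every thread lies in it, so
   a thread is determined by v_0 and iota is bijective.  The intertwining relations are
   then computations, and (generalized) eigen-objects are transported along them. *)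

Section Blocks.
Variables (F : fieldType) (d : nat) (A : 'M[F]_d).

Lemma allowable_rcons2 b i j :
  allowable A (rcons (rcons b i) j) = allowable A (rcons b i) && allowed A i j.
Proof.
rewrite /allowable !size_rcons /=.
case: b => [|x b] //=; first by rewrite andbT.
by rewrite rcons_path last_rcons.
Qed.

Definition successors (U : {set 'I_d}) : {set 'I_d} :=
  [set k | [exists i in U, allowed A i k]].

(* The set S_m of the symbols that end an allowable block of length m.+1. *)
Definition reachable (m : nat) : {set 'I_d} := iter m successors setT.

Lemma successorsS (U V : {set 'I_d}) : U \subset V -> successors U \subset successors V.
Proof.
move=> /subsetP UV; apply/subsetP => k; rewrite !inE => /existsP [i /andP [iU ik]].
by apply/existsP; exists i; rewrite UV.
Qed.

Lemma reachableS m : reachable m.+1 \subset reachable m.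
Proof. by elim: m => [|m IH]; [exact: subsetT | exact: successorsS]. Qed.

Lemma reachable_le m n : (m <= n)%N -> reachable n \subset reachable m.
Proof.
move/subnK <-; elim: (n - m)%N => [|p IH] //.
by rewrite addSn; apply: subset_trans IH; apply: reachableS.
Qed.

Lemma reachable_stable m p :
  reachable m = reachable m.+1 -> reachable (p + m) = reachable m.
Proof.
move=> E; elim: p => [|p IH] //.
by rewrite addSn -[reachable (p + m).+1]/(successors (reachable (p + m))) IH {2}E.
Qed.

(* A strict decrease of S_m costs one symbol, so it can happen at most d times. *)
Lemma reachable_stationary : exists2 m, (m <= d)%N & reachable m = reachable m.+1.
Proof.
case: (boolP [exists m : 'I_d.+1, reachable m == reachable m.+1]).
  by move=> /existsP [m /eqP E]; exists m => //; rewrite -ltnS ltn_ord.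
move=> /existsPn N.
have card_le m : (m <= d.+1)%N -> (#|reachable m| + m <= d)%N.
  elim: m => [|m IH] Hm; first by rewrite addn0 /reachable /= cardsT card_ord.
  have pr : reachable m.+1 \proper reachable m.
    by rewrite properEneq reachableS andbT eq_sym (N (Ordinal Hm)).
  rewrite addnS; apply: leq_trans (IH (ltnW Hm)).
  by rewrite ltn_add2r proper_card.
by have := card_le d.+1 (leqnn _); rewrite addnS ltnNge leq_addl.
Qed.

Lemma reachable_d_sub n : reachable d \subset reachable n.
Proof.
have [m md E] := reachable_stationary.
case: (leqP n d) => [nd|dn]; first exact: reachable_le.
have md' : (m <= n)%N := leq_trans md (ltnW dn).
have := reachable_stable (n - m) E; have := reachable_stable (d - m) E.
by rewrite !subnK // => -> ->.
Qed.

Lemma allowable_reachable b j : allowable A (rcons b j) -> j \in reachable (size b).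
Proof.
elim/last_ind: b j => [|b i IH] j; first by rewrite inE.
rewrite allowable_rcons2 size_rcons => /andP [bi ij].
by rewrite inE; apply/existsP; exists i; rewrite ij andbT IH.
Qed.

Fixpoint block (m : nat) (k : 'I_d) : seq 'I_d :=
  if m is m'.+1 then
    if [pick i in reachable m' | allowed A i k] is Some i
    then rcons (block m' i) i else [::]
  else [::].

Lemma blockP m k :
  k \in reachable m -> size (block m k) = m /\ allowable A (rcons (block m k) k).
Proof.
elim: m k => [|m IH] k //; rewrite inE => /existsP [i0 /andP [i0S i0k]] /=.
case: pickP => [i /andP [iS ik] | none]; last by have := none i0; rewrite i0S i0k.
have [sz bl] := IH i iS.
by rewrite size_rcons sz allowable_rcons2 bl ik.
Qed.

End Blocks.

Section ThreadsAndStafs.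
Variables (F : fieldType) (d : nat) (A : 'M[F]_d).
Hypothesis A01 : forall i j, A i j = 0 \/ A i j = 1.

Lemma mulmx_allowed_sum (x : 'cV[F]_d) j :
  (A *m x) j 0 = \sum_(k | allowed A j k) x k 0.
Proof.
rewrite mxE [RHS]big_mkcond /=; apply: eq_bigr => k _.
rewrite /allowed; case: (A01 j k) => ->; last by rewrite eqxx mul1r.
by rewrite eq_sym oner_eq0 mul0r.
Qed.

Lemma mulmx_pow_on_eq0 m (U : {set 'I_d}) (y : 'cV[F]_d) :
  (forall k, k \in iter m (successors A) U -> y k 0 = 0) ->
  forall j, j \in U -> (A ^+ m *m y) j 0 = 0.
Proof.
elim: m U y => [|m IH] U y y0 j jU; first by rewrite expr0 mul1mx y0.
rewrite exprSr -mulmxE -mulmxA; apply: (IH U) => // k kU.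
rewrite mulmx_allowed_sum; apply: big1 => l kl; apply: y0.
by rewrite /= inE; apply/existsP; exists k; rewrite kU kl.
Qed.

Lemma thread_pow t : is_thread A t -> forall n m, t n = A ^+ m *m t (n + m)%N.
Proof.
move=> Ht n; elim=> [|m IH]; first by rewrite expr0 mul1mx addn0.
by rewrite IH Ht exprSr -mulmxE -mulmxA addnS.
Qed.

(* (t n)_j is known only for j in S_n, but t n = A^d t (n + d) only involves S_d. *)
Lemma thread_eq0 t :
  is_thread A t -> (forall n j, j \in reachable A n -> t n j 0 = 0) -> forall n, t n = 0.
Proof.
move=> Ht t0 n; rewrite (thread_pow Ht n d); apply/matrixP => j c.
rewrite ord1 [RHS]mxE; apply: (mulmx_pow_on_eq0 (U := setT)) => // k kS.
exact/t0/(subsetP (reachable_d_sub A (n + d))).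
Qed.

Lemma kappa_rcons (t : nat -> 'cV[F]_d) b j : kappa t (rcons b j) = t (size b) j 0.
Proof. by case: b => [|x b] //=; rewrite size_rcons last_rcons. Qed.

Lemma kappa_ext (t u : nat -> 'cV[F]_d) :
  (forall n, t n = u n) -> forall s, kappa t s = kappa u s.
Proof. by move=> tu [|j s] //=; rewrite tu. Qed.

Lemma kappa_lin (a : F) (t u : nat -> 'cV[F]_d) s :
  kappa (fun n => a *: t n + u n) s = a * kappa t s + kappa u s.
Proof. by case: s => [|j s] /=; rewrite ?mulr0 ?addr0 // !mxE. Qed.

Lemma kappa_scale (a : F) (t : nat -> 'cV[F]_d) s :
  kappa (fun n => a *: t n) s = a * kappa t s.
Proof. by case: s => [|j s] /=; rewrite ?mulr0 // !mxE. Qed.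

Lemma kappa_sub (mu : F) (t u : nat -> 'cV[F]_d) s :
  kappa (fun n => u n - mu *: t n) s = kappa u s - mu * kappa t s.
Proof. by case: s => [|j s] /=; rewrite ?mulr0 ?subr0 // !mxE. Qed.

Lemma kappa0 s : kappa (fun _ : nat => (0 : 'cV[F]_d)) s = 0.
Proof. by case: s => [|j s] //=; rewrite mxE. Qed.

Lemma kappa_is_staf t : is_thread A t -> is_staf A (kappa t).
Proof.
move=> Ht; split; last by move=> b c j _ _ e; rewrite !kappa_rcons e.
move=> b j _; rewrite kappa_rcons Ht mulmx_allowed_sum; apply: eq_bigr => k _.
by rewrite kappa_rcons size_rcons.
Qed.

Lemma kappa_inj t u :
  is_thread A t -> is_thread A u -> staf_eq A (kappa t) (kappa u) ->
  forall n, t n = u n.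
Proof.
move=> Ht Hu tu n; apply/eqP; rewrite -subr_eq0; apply/eqP.
have Htu : is_thread A (fun n => t n - u n) by move=> m; rewrite mulmxBr -Ht -Hu.
apply: (thread_eq0 Htu) => m j jS; have [sz bl] := blockP jS.
by rewrite !mxE; have := tu _ bl; rewrite !kappa_rcons sz => ->; rewrite subrr.
Qed.

Definition staf_col (K : seq 'I_d -> F) (m : nat) : 'cV[F]_d :=
  \col_k (if k \in reachable A m then K (rcons (block A m k) k) else 0).

Lemma staf_col_pow K : is_staf A K -> forall m b j, allowable A (rcons b j) ->
  K (rcons b j) = (A ^+ m *m staf_col K (size b + m)) j 0.
Proof.
move=> [Kadd Kcoh]; elim=> [|m IH] b j bj.
  rewrite expr0 mul1mx addn0 mxE (allowable_reachable bj).
  have [sz bl] := blockP (allowable_reachable bj).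
  by apply: Kcoh; rewrite ?sz.
rewrite exprS -mulmxE -mulmxA mulmx_allowed_sum Kadd //; apply: eq_bigr => k jk.
by rewrite -addSnnS -(size_rcons b j) IH // allowable_rcons2 bj jk.
Qed.

Definition staf_thread (K : seq 'I_d -> F) (n : nat) : 'cV[F]_d :=
  A ^+ d *m staf_col K (n + d).

(* staf_col K m and A *m staf_col K m.+1 agree on S_m, and A^d only reads S_d. *)
Lemma staf_thread_is_thread K : is_staf A K -> is_thread A (staf_thread K).
Proof.
move=> HK n; rewrite /staf_thread mulmxA mulmxE -exprS exprSr -mulmxE -mulmxA.
apply/eqP; rewrite -subr_eq0 -mulmxBr; apply/eqP/matrixP => j c.
rewrite ord1 [RHS]mxE; apply: (mulmx_pow_on_eq0 (U := setT)) => // k kS.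
have kS' : k \in reachable A (n + d) by apply: (subsetP (reachable_d_sub A (n + d))).
have [sz bl] := blockP kS'.
rewrite !mxE kS' (staf_col_pow HK 1 bl) expr1 sz addn1 addSn.
by rewrite [in X in X - _]mxE subrr.
Qed.

Lemma kappa_staf_thread K : is_staf A K -> staf_eq A (kappa (staf_thread K)) K.
Proof.
by move=> HK s; case/lastP: s => [|b j] // bj; rewrite kappa_rcons (staf_col_pow HK d bj).
Qed.

Lemma Astar_thread t : is_thread A t -> is_thread A (Astar A t).
Proof. by move=> Ht n; rewrite /Astar {1}(Ht n). Qed.

Lemma scale_thread (a : F) t : is_thread A t -> is_thread A (fun n => a *: t n).
Proof. by move=> Ht n; rewrite (Ht n) scalemxAr. Qed.

Lemma sigma_star_congr K K' :
  staf_eq A K K' -> staf_eq A (sigma_star A K) (sigma_star A K').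
Proof.
move=> KK' [|x [|y s]] Hs //=; first by apply: eq_bigr => k _; apply: KK'.
by apply: KK'; move: Hs; rewrite /allowable /= => /andP [_ ->].
Qed.

Lemma sigma_star_kappa t :
  is_thread A t -> staf_eq A (sigma_star A (kappa t)) (kappa (Astar A t)).
Proof.
move=> Ht [|x [|y s]] _ //=; first by rewrite mulmx_allowed_sum.
by rewrite /Astar -Ht.
Qed.

Definition Astar_shift (mu : F) (t : nat -> 'cV[F]_d) : nat -> 'cV[F]_d :=
  fun n => Astar A t n - mu *: t n.

Lemma Astar_shift_ext mu k t u :
  (forall n, t n = u n) -> forall n, iter k (Astar_shift mu) t n = iter k (Astar_shift mu) u n.
Proof. by move=> tu; elim: k => [|k IH] n //=; rewrite /Astar_shift /Astar IH. Qed.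

Lemma Astar_shift_thread mu k t :
  is_thread A t -> is_thread A (iter k (Astar_shift mu) t).
Proof.
move=> Ht; elim: k => [|k IH] //= n.
by rewrite /Astar_shift /Astar {1 2}(IH n) mulmxBr -scalemxAr.
Qed.

Lemma sigma_shift_pow_congr mu k K K' :
  staf_eq A K K' -> staf_eq A (sigma_shift_pow A mu k K) (sigma_shift_pow A mu k K').
Proof.
by move=> KK'; elim: k => [|k IH] //= s Hs; rewrite (sigma_star_congr IH Hs) IH.
Qed.

Lemma sigma_shift_pow_kappa mu k t : is_thread A t ->
  staf_eq A (sigma_shift_pow A mu k (kappa t)) (kappa (iter k (Astar_shift mu) t)).
Proof.
move=> Ht; elim: k => [|k IH] //= s Hs.
rewrite (sigma_star_congr IH Hs) IH // (sigma_star_kappa (Astar_shift_thread mu k Ht) Hs).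
by rewrite kappa_sub.
Qed.

End ThreadsAndStafs.

Section FittingPart.
Variables (F : fieldType) (d : nat) (A : 'M[F]_d).

Lemma NonN_lin (a : F) v w : NonN A v -> NonN A w -> NonN A (a *: v + w).
Proof. by move=> [x ->] [y ->]; exists (a *: x + y); rewrite mulmxDr -scalemxAr. Qed.

Lemma NonN_mulmx (M : 'M[F]_d) v : M * A = A * M -> NonN A v -> NonN A (M *m v).
Proof.
move=> MA [x ->]; exists (M *m x).
by rewrite !mulmxA !mulmxE (commrX d MA).
Qed.

Lemma thread_NonN t : is_thread A t -> forall n, NonN A (t n).
Proof. by move=> Ht n; exists (t (n + d)%N); apply: thread_pow. Qed.

Variable B : 'cV[F]_d -> 'cV[F]_d.
Hypothesis HB : forall v, NonN A v -> [/\ NonN A (B v), A *m B v = v & B (A *m v) = v].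

Lemma NonN_iota v n : NonN A v -> NonN A (iota_map B v n).
Proof. by move=> Hv; elim: n => [|n IH] //=; have [] := HB IH. Qed.

Lemma B_lin (a : F) v w : NonN A v -> NonN A w -> B (a *: v + w) = a *: B v + B w.
Proof.
move=> Hv Hw; have [Bv ABv _] := HB Hv; have [Bw ABw _] := HB Hw.
have -> : a *: v + w = A *m (a *: B v + B w) by rewrite mulmxDr -scalemxAr ABv ABw.
by have [_ _ ->] := HB (NonN_lin a Bv Bw).
Qed.

Lemma iota_lin (a : F) v w : NonN A v -> NonN A w ->
  forall n, iota_map B (a *: v + w) n = a *: iota_map B v n + iota_map B w n.
Proof.
move=> Hv Hw; elim=> [|n IH] //=; rewrite -!/(iota_map B _ n) IH.
exact: B_lin (NonN_iota n Hv) (NonN_iota n Hw).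
Qed.

Lemma iota_thread v : NonN A v -> is_thread A (iota_map B v).
Proof. by move=> Hv n /=; have [_ -> _] := HB (NonN_iota n Hv). Qed.

Lemma thread_iota t : is_thread A t -> forall n, iota_map B (t 0%N) n = t n.
Proof.
move=> Ht; elim=> [|n IH] //=; rewrite -/(iota_map B _ n) IH Ht.
by have [_ _ ->] := HB (thread_NonN Ht n.+1).
Qed.

Lemma Astar_iota v : NonN A v -> forall n, Astar A (iota_map B v) n = iota_map B (A *m v) n.
Proof.
move=> Hv; elim=> [|n IH] //=; rewrite -!/(iota_map B _ n) -IH /Astar.
have [_ -> _] := HB (NonN_iota n Hv).
by have [_ _ ->] := HB (NonN_iota n Hv).
Qed.

Lemma iota0 n : iota_map B 0 n = 0.
Proof.
have N0 : NonN A 0 by exists 0; rewrite mulmx0.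
by elim: n => [|n IH] //=; rewrite -/(iota_map B 0 n) IH; have [_ _] := HB N0; rewrite mulmx0.
Qed.

Lemma Astar_shift_iota mu k v : NonN A v ->
  forall n, iter k (Astar_shift A mu) (iota_map B v) n = iota_map B ((A - mu%:M) ^+ k *m v) n.
Proof.
move=> Hv; elim: k => [|k IH] n; first by rewrite expr0 mul1mx.
set w := (A - mu%:M) ^+ k *m v.
have Hw : NonN A w.
  apply: NonN_mulmx Hv; apply/esym/commrX.
  by rewrite /GRing.comm mulrBl mulrBr -!mulmxE scalar_mxC.
have -> : (A - mu%:M) ^+ k.+1 *m v = (- mu) *: w + A *m w.
  by rewrite exprS -mulmxE -mulmxA mulmxBl mul_scalar_mx addrC scaleNr.
rewrite iota_lin //; last exact: NonN_mulmx Hw.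
rewrite /= /Astar_shift /Astar !IH -/w; have := Astar_iota Hw n; rewrite /Astar => ->.
by rewrite scaleNr addrC.
Qed.

End FittingPart.

Section EigenObjects.
Variables (F : fieldType) (d : nat) (A : 'M[F]_d).
Hypothesis A01 : forall i j, A i j = 0 \/ A i j = 1.

Lemma geometric_seq (t : nat -> 'cV[F]_d) (mu : F) :
  (forall n, t n = mu *: t n.+1) -> mu != 0 -> forall n, t n = mu ^- n *: t 0%N.
Proof.
move=> tS mu0; elim=> [|n IH]; first by rewrite expr0 invr1 scale1r.
by rewrite -[t n.+1]scale1r -(mulVf mu0) -scalerA -tS IH scalerA -invfM -exprS.
Qed.

Lemma staf_thread_eigen K mu : is_staf A K ->
  staf_eq A (sigma_star A K) (fun s => mu * K s) ->
  forall n, Astar A (staf_thread A K) n = mu *: staf_thread A K n.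
Proof.
move=> HK Keig; have Ht := staf_thread_is_thread A01 HK.
move=> n; apply: (kappa_inj A01 (Astar_thread Ht) (scale_thread mu Ht)) => s Hs.
have Hk := kappa_staf_thread A01 HK.
by rewrite kappa_scale -(sigma_star_kappa A01 Ht Hs) (sigma_star_congr Hk Hs) Keig // Hk.
Qed.

Lemma eigen_staf_eigenvector K mu : is_staf A K -> eigen_staf A K mu ->
  exists v0 : 'cV[F]_d, [/\ mu != 0, v0 != 0, A *m v0 = mu *: v0 &
    forall s j, allowable A (rcons s j) -> K (rcons s j) = mu ^- (size s) * v0 j 0].
Proof.
move=> HK [[s0 [Hs0 Ks0]] Keig]; set t := staf_thread A K.
have Ht : is_thread A t := staf_thread_is_thread A01 HK.
have Hk : staf_eq A (kappa t) K := kappa_staf_thread A01 HK.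
have At := staf_thread_eigen HK Keig.
have tS n : t n = mu *: t n.+1 by rewrite {1}(Ht n) -At.
have t_neq0 : ~ (forall n, t n = 0).
  by move=> t0; move: Ks0; rewrite -Hk // (kappa_ext t0) kappa0 eqxx.
have mu0 : mu != 0.
  by apply/negP => /eqP mu0; apply: t_neq0 => n; rewrite tS mu0 scale0r.
have tn := geometric_seq tS mu0.
exists (t 0%N); split => //.
- by apply/negP => /eqP t00; apply: t_neq0 => n; rewrite tn t00 scaler0.
- exact: At 0%N.
- by move=> s j Hs; rewrite -Hk // kappa_rcons tn mxE.
Qed.

Lemma eigenvector_eigen_staf K mu (v0 : 'cV[F]_d) :
  mu != 0 -> v0 != 0 -> A *m v0 = mu *: v0 ->
  (forall s j, allowable A (rcons s j) -> K (rcons s j) = mu ^- (size s) * v0 j 0) ->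
  eigen_staf A K mu.
Proof.
move=> mu0 v00 Av Kv; pose t n := mu ^- n *: v0.
have Ht : is_thread A t.
  by move=> n; rewrite /t -scalemxAr Av scalerA exprSr invfM -mulrA mulVf ?mulr1.
have Kt : staf_eq A K (kappa t).
  by case/lastP => [|b j] // bj; rewrite kappa_rcons Kv // mxE.
have At n : Astar A t n = mu *: t n by rewrite /Astar /t -scalemxAr Av !scalerA mulrC.
split.
  have [j vj] : exists j, v0 j 0 != 0.
    apply/existsP; apply: contraNT v00 => /existsPn v0j.
    by apply/eqP/matrixP => i c; rewrite ord1 mxE; apply/eqP/negPn/v0j.
  by exists [:: j]; rewrite (Kv [::] j) // expr0 invr1 mul1r.
move=> s Hs; rewrite (sigma_star_congr Kt Hs) (sigma_star_kappa A01 Ht Hs).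
by rewrite (kappa_ext At) kappa_scale Kt.
Qed.

Variable B : 'cV[F]_d -> 'cV[F]_d.
Hypothesis HB : forall v, NonN A v -> [/\ NonN A (B v), A *m B v = v & B (A *m v) = v].

Lemma gen_eigen_stafP K mu k : is_staf A K ->
  staf_eq A (sigma_shift_pow A mu k K) (fun _ => 0) <->
  exists2 v, NonN A v /\ (A - mu%:M) ^+ k *m v = 0 & staf_eq A K (kappa (iota_map B v)).
Proof.
move=> HK; split=> [K0 | [v [Hv v0] Kv] s Hs].
  set t := staf_thread A K; have Ht : is_thread A t := staf_thread_is_thread A01 HK.
  have Hk : staf_eq A (kappa t) K := kappa_staf_thread A01 HK.
  exists (t 0%N); last by move=> s Hs; rewrite -Hk // (kappa_ext (thread_iota HB Ht)).
  split; first exact: thread_NonN Ht 0%N.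
  have shift0 n : iter k (Astar_shift A mu) t n = 0.
    apply: (kappa_inj A01 (Astar_shift_thread mu k Ht) (u := fun _ => 0)) => [m|s Hs].
      by rewrite mulmx0.
    rewrite kappa0 -(sigma_shift_pow_kappa A01 mu k Ht Hs).
    by rewrite (sigma_shift_pow_congr mu k Hk Hs) K0.
  have := Astar_shift_iota HB mu k (thread_NonN Ht 0) 0.
  by rewrite (Astar_shift_ext A mu k (thread_iota HB Ht)) shift0 => /esym.
rewrite (sigma_shift_pow_congr mu k Kv Hs).
rewrite (sigma_shift_pow_kappa A01 mu k (iota_thread HB Hv) Hs).
by rewrite (kappa_ext (Astar_shift_iota HB mu k Hv)) v0 (kappa_ext (iota0 HB)) kappa0.
Qed.

End EigenObjects.

Theorem fact8p4 (F : fieldType) (d : nat) (A : 'M[F]_d)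
  (A01 : forall i j, A i j = 0 \/ A i j = 1)
  (B : 'cV[F]_d -> 'cV[F]_d)
  (HB : forall v, NonN A v -> [/\ NonN A (B v), A *m B v = v & B (A *m v) = v]) :
  [/\ forall v, NonN A v -> is_thread A (iota_map B v),
      forall (a : F) v w, NonN A v -> NonN A w ->
        forall n, iota_map B (a *: v + w) n = a *: iota_map B v n + iota_map B w n,
      forall v w, NonN A v -> NonN A w ->
        (forall n, iota_map B v n = iota_map B w n) -> v = w
    & forall t, is_thread A t -> exists2 v, NonN A v & forall n, iota_map B v n = t n] /\
  [/\ forall t, is_thread A t -> is_staf A (kappa t),
      forall (a : F) t u, staf_eq A (kappa (fun n => a *: t n + u n))
                                    (fun s => a * kappa t s + kappa u s),
      forall t u, is_thread A t -> is_thread A u ->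
        staf_eq A (kappa t) (kappa u) -> forall n, t n = u n
    & forall K, is_staf A K -> exists2 t, is_thread A t & staf_eq A (kappa t) K] /\
  (forall v, NonN A v -> forall n, Astar A (iota_map B v) n = iota_map B (A *m v) n) /\
  (forall t, is_thread A t -> staf_eq A (sigma_star A (kappa t)) (kappa (Astar A t))) /\
  (forall (K : seq 'I_d -> F) (mu : F), is_staf A K ->
     (eigen_staf A K mu <->
      exists v0 : 'cV[F]_d, [/\ mu != 0, v0 != 0, A *m v0 = mu *: v0 &
        forall (s : seq 'I_d) (j : 'I_d), allowable A (rcons s j) ->
          K (rcons s j) = mu ^- (size s) * v0 j 0])) /\
  (forall (K : seq 'I_d -> F) (mu : F) (k : nat), is_staf A K ->
     (staf_eq A (sigma_shift_pow A mu k K) (fun _ => 0) <->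
      exists2 v : 'cV[F]_d, NonN A v /\ (A - mu%:M) ^+ k *m v = 0 &
        staf_eq A K (kappa (iota_map B v)))).
Proof.
split.
  split; [exact: iota_thread | exact: iota_lin | by move=> v w _ _ /(_ 0%N) |].
  move=> t Ht; exists (t 0%N) => [|n]; first exact: thread_NonN Ht 0%N.
  exact: (thread_iota HB Ht n).
split.
  split; [exact: kappa_is_staf | by move=> a t u s _; apply: kappa_lin | exact: kappa_inj |].
  move=> K HK; exists (staf_thread A K); first exact: staf_thread_is_thread.
  exact: kappa_staf_thread.
split; first exact: Astar_iota.
split; first exact: sigma_star_kappa.
split; last exact: gen_eigen_stafP.
move=> K mu HK; split; first exact: eigen_staf_eigenvector.
by case=> v0 [mu0 v00 Av Kv]; apply: eigenvector_eigen_staf Av Kv.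
Qed.
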